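(* Let $\mathbf C$ be a category of coframes and $(L,\lim_L)$ a convergence $\mathbf C$-object. Then $\lim_{T(L)}$, defined by $\lim_{T(L)}\mathcal F=\bigwedge\{c: c\in\mathcal F^\#\cap C(L)\}$, is the finest topological convergence structure on $L$ that is coarser than $\lim_L$: it is topological, $\lim_L\mathcal F\le\lim_{T(L)}\mathcal F$ for all $\mathcal F$, and every topological convergence structure $\lim$ on $L$ with $\lim_L\le\lim$ pointwise satisfies $\lim_{T(L)}\le\lim$ pointwise.
   Context: A category of coframes has coframes as objects and coframe morphisms. A filter on $L$ is a non-empty upward-closed subset closed under binary meets ($L$ allowed); $\mathbb F L$ is the set of filters. A convergence structure on $L$ is a monotone map $\lim:\mathbb F L\to L$; a convergence $\mathbf C$-object is a $\mathbf C$-object with a convergence structure. For $\mathcal A\subseteq L$, $\mathcal A^\#=\{\ell: a\wedge\ell\ne\bot\ \forall a\in\mathcal A\}$. For a convergence structure $\lim$, an element $c$ is closed if it is complemented and $\lim\mathcal F\le c$ for every filter $\mathcal F$ with $c\in\mathcal F^\#$; $C(\lim)$ (written $C(L)$ for $\lim_L$) is the set of closed elements. A convergence structure $\lim$ is topological if $\lim\mathcal F=\bigwedge\{c:c\in\mathcal F^\#\cap C(\lim)\}$ for every filter $\mathcal F$. Convergence structures are ordered pointwise; $\lim\le\lim'$ means $\lim$ is finer (and $\lim'$ coarser). *)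

Set Implicit Arguments.


Record coframe := Coframe {
  car :> Type;
  le : car -> car -> Prop;
  bot : car;
  top : car;
  meet : car -> car -> car;
  join : car -> car -> car;
  Meet : (car -> Prop) -> car;
  le_refl : forall x, le x x;
  le_trans : forall x y z, le x y -> le y z -> le x z;
  le_antisym : forall x y, le x y -> le y x -> x = y;
  bot_le : forall x, le bot x;
  le_top : forall x, le x top;
  meet_glb : forall x y z, le z (meet x y) <-> (le z x /\ le z y);
  join_lub : forall x y z, le (join x y) z <-> (le x z /\ le y z);
  Meet_glb : forall (S : car -> Prop) z,
      le z (Meet S) <-> (forall s, S s -> le z s);
  join_Meet_distr : forall (a : car) (S : car -> Prop),
      join a (Meet S) = Meet (fun x => exists s, S s /\ x = join a s)
}.

Arguments le {c}.
Arguments bot {c}.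
Arguments top {c}.
Arguments meet {c}.
Arguments join {c}.
Arguments Meet {c}.

Section Defs.
Variable L : coframe.

(* Filter: non-empty, upward closed, closed under binary meets (L allowed). *)
Definition is_filter (F : L -> Prop) : Prop :=
  (exists a, F a) /\
  (forall a b, F a -> le a b -> F b) /\
  (forall a b, F a -> F b -> F (meet a b)).

Definition filter := { F : L -> Prop | is_filter F }.
Definition fset (F : filter) : L -> Prop := proj1_sig F.

Definition is_convergence (lim : filter -> L) : Prop :=
  forall F G : filter, (forall a, fset F a -> fset G a) -> le (lim F) (lim G).

Definition sharp (A : L -> Prop) : L -> Prop :=
  fun l => forall a, A a -> meet a l <> bot.

Definition complemented (c : L) : Prop :=
  exists d, meet c d = bot /\ join c d = top.

Definition closed_el (lim : filter -> L) (c : L) : Prop :=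
  complemented c /\ (forall F : filter, sharp (fset F) c -> le (lim F) c).

Definition topological (lim : filter -> L) : Prop :=
  forall F : filter,
    lim F = Meet (fun c => sharp (fset F) c /\ closed_el lim c).

Definition limT (limL : filter -> L) : filter -> L :=
  fun F => Meet (fun c => sharp (fset F) c /\ closed_el limL c).

End Defs.


(* An element closed for a convergence structure stays closed for every finer
   one, and [limL <= limT limL] because [limL F] is below every closed element
   of [F^#]. Hence [limL] and [limT limL] have the same closed elements, which
   makes [limT limL] topological; and any topological [lim] coarser than [limL]
   has fewer closed elements, so its defining meet is over a smaller set. *)

Section ConvergenceCoframe.
Variable L : coframe.

Lemma Meet_le (S : L -> Prop) (s : L) : S s -> le (Meet S) s.
Proof. exact (proj1 (Meet_glb L S (Meet S)) (le_refl L _) s). Qed.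

Lemma Meet_antimono (S T : L -> Prop) :
  (forall c, S c -> T c) -> le (Meet T) (Meet S).
Proof.
  intros HST. apply (proj2 (Meet_glb L S (Meet T))).
  intros s Hs. apply Meet_le. auto.
Qed.

Lemma Meet_ext (S T : L -> Prop) :
  (forall c, S c <-> T c) -> Meet S = Meet T.
Proof.
  intros HST. apply le_antisym; apply Meet_antimono; firstorder.
Qed.

Lemma sharp_antimono (A B : L -> Prop) :
  (forall a, A a -> B a) -> forall l, sharp L B l -> sharp L A l.
Proof. intros HAB l HB a Ha. auto. Qed.

Lemma closed_el_finer (lim lim' : filter L -> L) (c : L) :
  (forall F, le (lim F) (lim' F)) -> closed_el lim' c -> closed_el lim c.
Proof.
  intros Hle [Hcomp Hcl]. split; [exact Hcomp |].
  intros F HF. eapply le_trans; [apply Hle | exact (Hcl F HF)].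
Qed.

Variable limL : filter L -> L.

Lemma limT_convergence : is_convergence (limT limL).
Proof.
  intros F G HFG. apply Meet_antimono.
  intros c [Hs Hcl]. split; [exact (sharp_antimono _ _ HFG _ Hs) | exact Hcl].
Qed.

Lemma le_limT (F : filter L) : le (limL F) (limT limL F).
Proof.
  apply (proj2 (Meet_glb L _ _)). intros c [Hs [_ Hcl]]. exact (Hcl F Hs).
Qed.

Lemma closed_el_limT (c : L) : closed_el (limT limL) c <-> closed_el limL c.
Proof.
  split.
  - apply closed_el_finer. exact le_limT.
  - intros [Hcomp Hcl]. split; [exact Hcomp |].
    intros F HF. apply Meet_le. repeat split; assumption.
Qed.

Lemma limT_topological : topological (limT limL).
Proof.
  intros F. apply Meet_ext. intros c.
  pose proof (closed_el_limT c). tauto.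
Qed.

Lemma limT_le_topological (lim : filter L -> L) :
  topological lim -> (forall F, le (limL F) (lim F)) ->
  forall F, le (limT limL F) (lim F).
Proof.
  intros Htop Hle F. rewrite (Htop F). apply Meet_antimono.
  intros c [Hs Hcl]. split; [exact Hs | exact (closed_el_finer _ _ _ Hle Hcl)].
Qed.

End ConvergenceCoframe.

Theorem mainTheorem18 (L : coframe) (limL : filter L -> L) :
  is_convergence limL ->
  (is_convergence (limT limL) /\ topological (limT limL)) /\
  (forall F : filter L, le (limL F) (limT limL F)) /\
  (forall lim : filter L -> L,
      is_convergence lim -> topological lim ->
      (forall F : filter L, le (limL F) (lim F)) ->
      forall F : filter L, le (limT limL F) (lim F)).
Proof.
  intros _. split; [split | split].
  - apply limT_convergence.
  - apply limT_topological.
  - apply le_limT.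
  - intros lim _. apply limT_le_topological.
Qed.
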